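(* Let $q$ be a power of $2$, $n\ge 4$, and let $M$ be an $n\times n$ matrix with entries in $\mathbb{F}_q$. Then $0\in\mathrm{Num}'_0(M)_q$.
   Context: For $M=(m_{ij})$ with entries in $\mathbb{F}_q$ and $u=(x_1,\dots,x_n)\in\mathbb{F}_q^n$, with the Hermitian form $\langle u,v\rangle=\sum_i u_i^qv_i$ one has $\langle u,u\rangle=\sum_i x_i^2$ and $\langle u,Mu\rangle=\sum_{i,j}m_{ij}x_ix_j$. $\mathrm{Num}'_0(M)_q=\{\langle u,Mu\rangle: u\in\mathbb{F}_q^n\setminus\{0\},\ \langle u,u\rangle=0\}$. *)

From mathcomp Require Import all_boot all_order all_algebra.
Set Implicit Arguments. Unset Strict Implicit. Unset Printing Implicit Defensive.
Import GRing.Theory.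
Local Open Scope ring_scope.

(* Hermitian form <u,v> = sum_i u_i^q v_i, where q = #|F|.  For vectors with
   entries in F = F_q this is the form of the paper restricted to F_q^n. *)
Definition herm (F : finFieldType) (n : nat) (u v : 'cV[F]_n) : F :=
  \sum_(i < n) (u i 0) ^+ #|F| * v i 0.

Definition NumPrime0 (F : finFieldType) (n : nat) (M : 'M[F]_n) : {set F} :=
  [set z | [exists u : 'cV[F]_n,
     [&& u != 0, herm u u == 0 & herm u (M *m u) == z]]].

From mathcomp Require Import all_boot all_order all_algebra all_field.
From mathcomp Require Import ring.
Set Implicit Arguments. Unset Strict Implicit. Unset Printing Implicit Defensive.
Import GRing.Theory.
Local Open Scope ring_scope.

(* Over F_q the map u |-> u^q is the identity, so <u,u> and <u,Mu> are the
   quadratic forms of 1 and M.  In characteristic 2 the form of 1 has zero polar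
   form and vanishes on e_i + e_3 for i = 0, 1, 2, hence on the whole span W of
   these three vectors.  The form of M restricted to W is a ternary quadratic
   form over a field in which every element is a square (the Frobenius is
   bijective on a finite field), and such a form has a nontrivial zero: choose
   (x, y) <> 0 killing the mixed terms in z, then solve for z^2. *)

Section QuadraticForm.
Variables (R : comNzRingType) (n : nat).
Implicit Types (N : 'M[R]_n) (a b c : 'cV[R]_n).

Definition qform N a : R := (a^T *m N *m a) 0 0.
Definition qpolar N a b : R := (a^T *m (N + N^T) *m b) 0 0.

Lemma qformZ N x a : qform N (x *: a) = x ^+ 2 * qform N a.
Proof. by rewrite /qform !linearZ /= -!scalemxAl !mxE mulrA. Qed.

Lemma qpolarDl N a b c : qpolar N (a + b) c = qpolar N a c + qpolar N b c.
Proof. by rewrite /qpolar [(a + b)^T]raddfD !mulmxDl mxE. Qed.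

Lemma qpolarZl N x a b : qpolar N (x *: a) b = x * qpolar N a b.
Proof. by rewrite /qpolar linearZ /= -!scalemxAl mxE. Qed.

Lemma qpolarZr N x a b : qpolar N a (x *: b) = x * qpolar N a b.
Proof. by rewrite /qpolar -scalemxAr mxE. Qed.

Lemma qformD N a b : qform N (a + b) = qform N a + qform N b + qpolar N a b.
Proof.
have trC : (b^T *m N *m a) 0 0 = (a^T *m N^T *m b) 0 0.
  have -> : a^T *m N^T *m b = (b^T *m N *m a)^T by rewrite !trmx_mul trmxK mulmxA.
  by rewrite [RHS]mxE.
rewrite /qform /qpolar [(a + b)^T]raddfD /= !mulmxDr !mulmxDl.
by rewrite ![(_ + _ : 'M_1) 0 0]mxE trC; ring.
Qed.

Lemma qform_expand3 N a b c x y z :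
  qform N (x *: a + y *: b + z *: c) =
  x ^+ 2 * qform N a + y ^+ 2 * qform N b + z ^+ 2 * qform N c
  + x * y * qpolar N a b + x * z * qpolar N a c + y * z * qpolar N b c.
Proof.
by rewrite !qformD !qformZ qpolarDl !qpolarZl !qpolarZr; ring.
Qed.

Lemma qform1_delta (i : 'I_n) : qform 1 (delta_mx i 0) = 1.
Proof. by rewrite /qform mulmx1 trmx_delta mul_delta_mx mxE !eqxx. Qed.

Lemma qpolar1_pchar2 a b : 2 \in [pchar R] -> qpolar 1 a b = 0.
Proof.
by move=> two_char; rewrite /qpolar trmx1 mulmxDr mulmxDl mulmx1 mxE addrr_pchar2.
Qed.

End QuadraticForm.

Lemma herm_qform (F : finFieldType) (n : nat) (N : 'M[F]_n) (u : 'cV[F]_n) :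
  herm u (N *m u) = qform N u.
Proof.
rewrite /herm /qform -mulmxA mxE; apply: eq_bigr => i _.
by rewrite expf_card [u^T 0 i]mxE.
Qed.

Lemma finField_sqrt_exists_pchar2 (F : finFieldType) (two_char : 2 \in [pchar F]) (w : F) :
  exists r, r ^+ 2 = w.
Proof.
have /codomP [r ->] := injF_onto (fmorph_inj (pFrobenius_aut two_char)) w.
by exists r; rewrite -(pFrobenius_autE two_char).
Qed.

Lemma linear_form2_nontrivial_root (R : comNzRingType) (e f : R) :
  exists x y : R, ((x != 0) || (y != 0)) /\ e * x + f * y = 0.
Proof.
have [/andP [/eqP -> /eqP ->] | ef_neq0] := boolP ((e == 0) && (f == 0)).
  by exists 1, 0; rewrite oner_eq0 !mul0r addr0.
exists f, (- e); split; last by rewrite mulrN mulrC subrr.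
by rewrite oppr_eq0 orbC -negb_and.
Qed.

Lemma ternary_quadratic_isotropic_pchar2 (F : fieldType)
    (two_char : 2 \in [pchar F]) (sqrt_exists : forall w : F, exists r, r ^+ 2 = w)
    (a b c d e f : F) :
  exists x y z : F, [|| x != 0, y != 0 | z != 0] /\
    x ^+ 2 * a + y ^+ 2 * b + z ^+ 2 * c + x * y * d + x * z * e + y * z * f = 0.
Proof.
have [-> | c_neq0] := eqVneq c 0.
  exists 0, 0, 1; split; first by rewrite oner_neq0 !orbT.
  by rewrite !(mul0r, mulr0, expr0n, add0r, addr0).
have [x [y [xy_neq0 exfy0]]] := linear_form2_nontrivial_root e f.
pose s := x ^+ 2 * a + y ^+ 2 * b + x * y * d.
have [z z2] := sqrt_exists (s / c).
exists x, y, z; split; first by case/orP: xy_neq0 => ->; rewrite ?orbT.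
have -> : z ^+ 2 * c = s by rewrite z2 divfK.
have -> : x ^+ 2 * a + y ^+ 2 * b + s + x * y * d + x * z * e + y * z * f
          = s + s + z * (e * x + f * y) by rewrite /s; ring.
by rewrite exfy0 mulr0 addr0 addrr_pchar2.
Qed.

Lemma common_isotropic_vector_pchar2 (F : fieldType)
    (two_char : 2 \in [pchar F]) (sqrt_exists : forall w : F, exists r, r ^+ 2 = w)
    (n : nat) (n_gt3 : (3 < n)%N) (N : 'M[F]_n) :
  exists u : 'cV[F]_n, [/\ u != 0, qform 1 u = 0 & qform N u = 0].
Proof.
pose i0 := Ordinal (ltnW (ltnW (ltnW n_gt3))).
pose i1 := Ordinal (ltnW (ltnW n_gt3)).
pose i2 := Ordinal (ltnW n_gt3).
pose i3 := Ordinal n_gt3.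
pose w (i : 'I_n) : 'cV[F]_n := delta_mx i 0 + delta_mx i3 0.
have qform1_w i : qform 1 (w i) = 0.
  by rewrite qformD !qform1_delta qpolar1_pchar2 // addr0 addrr_pchar2.
have [x [y [z [xyz_neq0 Qw_root]]]] := ternary_quadratic_isotropic_pchar2 two_char
  sqrt_exists (qform N (w i0)) (qform N (w i1)) (qform N (w i2))
  (qpolar N (w i0) (w i1)) (qpolar N (w i0) (w i2)) (qpolar N (w i1) (w i2)).
exists (x *: w i0 + y *: w i1 + z *: w i2); split.
- apply: contraTneq xyz_neq0 => /matrixP u0.
  have := u0 i0 0; have := u0 i1 0; have := u0 i2 0.
  rewrite !mxE -!val_eqE !eqxx /= !(addr0, mulr0, mulr1, add0r) => -> -> ->.
  by rewrite eqxx.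
- by rewrite qform_expand3 !qpolar1_pchar2 // !qform1_w !mulr0 !addr0.
- by rewrite qform_expand3 Qw_root.
Qed.

Theorem corollary2 (F : finFieldType) (k : nat) (hq : #|F| = (2 ^ k)%N)
  (n : nat) (hn : (4 <= n)%N) (M : 'M[F]_n) :
  0 \in NumPrime0 M.
Proof.
have two_char : 2 \in [pchar F] by exact: card_finPcharP hq _.
have [u [u_neq0 u_isotropic Mu0]] :=
  common_isotropic_vector_pchar2 two_char (finField_sqrt_exists_pchar2 two_char) hn M.
rewrite inE; apply/existsP; exists u; apply/and3P; split; first exact: u_neq0.
- by rewrite -[u in herm _ u]mul1mx herm_qform u_isotropic.
- by rewrite herm_qform Mu0.
Qed.
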